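(* Let $m,n,r$ be positive integers with $r\le n\le m$. Let $X\in\mathbb C^{m\times n}$ have rank $n$, and write $X=\begin{bmatrix}Y\\ \widetilde Y\end{bmatrix}$ with $Y\in\mathbb C^{r\times n}$ of rank $r$ and $\widetilde Y\in\mathbb C^{(m-r)\times n}$. Let $\Pi_X:=X(X^*X)^{-1}X^*$ and let $\Pi_X^{[r],[r]}$ be its top-left $r\times r$ submatrix. Then $\Pi_X^{[r],[r]}=I_r$ if and only if $\mathrm{colspan}(\widetilde Y)=\mathrm{colspan}(\widetilde YA)$ for some matrix $A$ whose column space equals $\ker Y$.
   Context: $\mathrm{colspan}(B)$ denotes the column space of a matrix $B$. *)

From mathcomp Require Import all_boot all_order all_algebra.
Set Implicit Arguments. Unset Strict Implicit. Unset Printing Implicit Defensive.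
Import Order.TTheory GRing.Theory Num.Theory.
Local Open Scope ring_scope.

Definition adjmx (C : numClosedFieldType) (p q : nat) (X : 'M[C]_(p, q)) : 'M[C]_(q, p) :=
  (map_mx Num.conj X)^T.

Definition projmx (C : numClosedFieldType) (p q : nat) (X : 'M[C]_(p, q)) : 'M[C]_p :=
  X *m invmx (adjmx X *m X) *m adjmx X.

(* colspan(B) = colspan(D), via row spaces of the transposes *)
Definition colspan_eq (C : fieldType) (p q1 q2 : nat)
  (B : 'M[C]_(p, q1)) (D : 'M[C]_(p, q2)) : bool :=
  (B^T == D^T)%MS.

(* colspan(A) = ker Y = { v | Y v = 0 }; kermx Y^T is the row kernel of Y^T,
   i.e. its rows u satisfy u Y^T = 0, i.e. Y u^T = 0 *)
Definition colspan_eq_ker (C : fieldType) (r n p : nat)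
  (A : 'M[C]_(n, p)) (Y : 'M[C]_(r, n)) : bool :=
  (A^T == kermx Y^T)%MS.

(* Let E = [I_r; 0] and Pi = Pi_X.  The top-left block of Pi is E^* Pi E, and
   since Pi is an orthogonal projector, I - E^* Pi E = ((I - Pi) E)^* ((I - Pi) E).
   Hence the block is I_r iff Pi E = E, i.e. iff X V = E for some V, i.e. iff
   Y V = I and Yt V = 0.  As Y has full row rank, such a V exists iff Yt maps
   ker Y onto colspan Yt: given that, a right inverse of Y can be corrected by
   an element of ker Y so that Yt kills it; conversely I - V Y maps into ker Y
   and Yt (I - V Y) = Yt.  This last condition does not depend on the choice
   of A with colspan A = ker Y. *)

From Corelib Require Import Setoid.
From mathcomp Require Import all_boot all_order all_algebra.
Import Order.TTheory GRing.Theory Num.Theory.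
Local Open Scope ring_scope.
Set Implicit Arguments. Unset Strict Implicit.

Section Adjoint.

Variable C : numClosedFieldType.

Lemma adjmx_mul p q s (A : 'M[C]_(p, q)) (B : 'M[C]_(q, s)) :
  adjmx (A *m B) = adjmx B *m adjmx A.
Proof. by rewrite /adjmx map_mxM trmx_mul. Qed.

Lemma adjmxK p q (A : 'M[C]_(p, q)) : adjmx (adjmx A) = A.
Proof.
rewrite /adjmx map_trmx trmxK -map_mx_comp.
by apply/matrixP => i j; rewrite !mxE; exact: conjCK.
Qed.

Lemma adjmx1 p : adjmx (1%:M : 'M[C]_p) = 1%:M.
Proof. by rewrite /adjmx map_mx1 trmx1. Qed.

Lemma adjmx0 p q : adjmx (0 : 'M[C]_(p, q)) = 0.
Proof. by rewrite /adjmx map_mx0 trmx0. Qed.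

Lemma adjmxB p q (A B : 'M[C]_(p, q)) : adjmx (A - B) = adjmx A - adjmx B.
Proof. by rewrite /adjmx map_mxB linearB. Qed.

Lemma adjmx_inv p (A : 'M[C]_p) : adjmx (invmx A) = invmx (adjmx A).
Proof. by rewrite /adjmx map_invmx trmx_inv. Qed.

Lemma mxrank_adj p q (A : 'M[C]_(p, q)) : \rank (adjmx A) = \rank A.
Proof. by rewrite /adjmx mxrank_tr mxrank_map. Qed.

Lemma adj_col_mx p1 p2 q (A : 'M[C]_(p1, q)) (B : 'M[C]_(p2, q)) :
  adjmx (col_mx A B) = row_mx (adjmx A) (adjmx B).
Proof. by rewrite /adjmx map_col_mx tr_col_mx. Qed.

(* The diagonal of D^* D holds the squared norms of the columns of D. *)
Lemma adj_mul_self_eq0 p q (D : 'M[C]_(p, q)) : adjmx D *m D = 0 -> D = 0.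
Proof.
move=> DD0; apply/matrixP => i j.
have := congr1 (fun M : 'M_q => M j j) DD0; rewrite !mxE => /eqP.
rewrite psumr_eq0; last by move=> k _; rewrite !mxE mulrC mul_conjC_ge0.
move=> /allP /(_ i (mem_index_enum _)) /=.
by rewrite !mxE mulrC mul_conjC_eq0 => /eqP.
Qed.

Lemma gram_unitmx p q (X : 'M[C]_(p, q)) : \rank X = q -> adjmx X *m X \in unitmx.
Proof.
move=> rankX; rewrite -row_free_unit -kermx_eq0; apply/eqP.
set U := kermx _.
have XU0 : X *m adjmx U = 0.
  apply: adj_mul_self_eq0.
  by rewrite adjmx_mul adjmxK mulmxA -(mulmxA U) mulmx_ker mul0mx.
have free_adjX : row_free (adjmx X) by rewrite /row_free mxrank_adj rankX.
apply: (row_free_inj free_adjX); rewrite mul0mx.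
by rewrite -(adjmxK (U *m adjmx X)) adjmx_mul adjmxK XU0 adjmx0.
Qed.

Lemma projector_compression_eq1 p r (P : 'M[C]_p) (E : 'M[C]_(p, r)) :
  adjmx P = P -> P *m P = P -> adjmx E *m E = 1%:M ->
  adjmx E *m P *m E = 1%:M <-> P *m E = E.
Proof.
move=> Padj Pidem Eiso.
have co_idem : adjmx (1%:M - P) *m (1%:M - P) = 1%:M - P.
  by rewrite adjmxB adjmx1 Padj mulmxBl mul1mx mulmxBr mulmx1 Pidem subrr subr0.
have defect : adjmx ((1%:M - P) *m E) *m ((1%:M - P) *m E)
              = 1%:M - adjmx E *m P *m E.
  by rewrite adjmx_mul !mulmxA -(mulmxA (adjmx E)) co_idem mulmxBr mulmx1
             mulmxBl Eiso.
split=> [EPE1 | PE].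
- have /eqP : (1%:M - P) *m E = 0.
    by apply: adj_mul_self_eq0; rewrite defect EPE1 subrr.
  by rewrite mulmxBl mul1mx subr_eq0 eq_sym => /eqP.
- by rewrite -mulmxA PE Eiso.
Qed.

Section Projector.

Variables (p q : nat) (X : 'M[C]_(p, q)).
Hypothesis rankX : \rank X = q.

Let gramX := gram_unitmx rankX.

Lemma projmx_adj : adjmx (projmx X) = projmx X.
Proof. by rewrite /projmx !adjmx_mul adjmx_inv adjmx_mul adjmxK !mulmxA. Qed.

Lemma projmx_mul_self : projmx X *m X = X.
Proof. by rewrite /projmx -!mulmxA mulVmx // mulmx1. Qed.

Lemma projmx_idem : projmx X *m projmx X = projmx X.
Proof. by rewrite {2}/projmx !mulmxA projmx_mul_self. Qed.

Lemma projmx_fixP s (B : 'M[C]_(p, s)) :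
  projmx X *m B = B <-> exists V, X *m V = B.
Proof.
split=> [PB | [V <-]]; last by rewrite mulmxA projmx_mul_self.
by exists (invmx (adjmx X *m X) *m adjmx X *m B); rewrite !mulmxA.
Qed.

End Projector.

End Adjoint.

Lemma ulsubmx_compression (R : pzRingType) r k (M : 'M[R]_(r + k)) :
  ulsubmx M = row_mx 1%:M 0 *m M *m col_mx 1%:M 0.
Proof.
rewrite -{2}(submxK M) mul_row_block !mul1mx !mul0mx !addr0.
by rewrite mul_row_col mulmx1 mulmx0 addr0.
Qed.

Section KernelImage.

Variables (F : fieldType) (r k n : nat) (Y : 'M[F]_(r, n)) (Yt : 'M[F]_(k, n)).

Lemma colspan_eq_mulker p (A : 'M[F]_(n, p)) : colspan_eq_ker A Y ->
  colspan_eq Yt (Yt *m A) = (Yt^T <= kermx Y^T *m Yt^T)%MS.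
Proof.
move=> /eqmxP kerA; rewrite /colspan_eq trmx_mul (eqmxMr _ kerA).
by rewrite submxMl andbT.
Qed.

Lemma exists_colspan_eq_kerP :
  (exists p (A : 'M[F]_(n, p)), colspan_eq_ker A Y && colspan_eq Yt (Yt *m A))
  <-> (Yt^T <= kermx Y^T *m Yt^T)%MS.
Proof.
split=> [[p [A /andP [kerA]]] | sub_mulker].
  by rewrite colspan_eq_mulker.
have kerA : colspan_eq_ker (kermx Y^T)^T Y by rewrite /colspan_eq_ker trmxK submx_refl.
by exists n, (kermx Y^T)^T; rewrite kerA colspan_eq_mulker.
Qed.

Hypothesis rankY : \rank Y = r.

Lemma sub_mulker_col_mxP :
  (Yt^T <= kermx Y^T *m Yt^T)%MS <-> exists V, col_mx Y Yt *m V = col_mx 1%:M 0.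
Proof.
split=> [sub_mulker | [V]]; last first.
  rewrite mul_col_mx => /eq_col_mx [YV1 YtV0].
  set N := (1%:M - V *m Y)^T.
  have NY0 : N *m Y^T = 0.
    by rewrite -trmx_mul mulmxBr mulmx1 mulmxA YV1 mul1mx subrr trmx0.
  have NYt : N *m Yt^T = Yt^T.
    by rewrite -trmx_mul mulmxBr mulmx1 mulmxA YtV0 mul0mx subr0.
  by rewrite -{1}NYt submxMr //; apply/sub_kermxP.
have /row_fullP [Z YZ1] : row_full Y^T by rewrite /row_full mxrank_tr rankY.
set S := Z *m Yt^T *m pinvmx (kermx Y^T *m Yt^T).
have SK : S *m (kermx Y^T *m Yt^T) = Z *m Yt^T.
  by apply: mulmxKpV; apply: submx_trans sub_mulker; apply: submxMl.
exists (Z - S *m kermx Y^T)^T; rewrite mul_col_mx; congr col_mx; apply: trmx_inj.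
  by rewrite trmx_mul trmxK trmx1 mulmxBl YZ1 -mulmxA mulmx_ker mulmx0 subr0.
by rewrite trmx_mul trmxK trmx0 mulmxBl -mulmxA SK subrr.
Qed.

End KernelImage.

Unset Implicit Arguments.

Theorem lemma8 (C : numClosedFieldType) (r k n : nat)
  (Y : 'M[C]_(r, n)) (Yt : 'M[C]_(k, n)) :
  (0 < r)%N -> (r <= n)%N -> (n <= r + k)%N ->
  \rank (col_mx Y Yt) = n -> \rank Y = r ->
  (ulsubmx (projmx (col_mx Y Yt)) = 1%:M <->
   exists (p : nat) (A : 'M[C]_(n, p)),
     colspan_eq_ker A Y && colspan_eq Yt (Yt *m A)).
Proof.
move=> _ _ _ rankX rankY.
have adjE : adjmx (col_mx 1%:M 0 : 'M[C]_(r + k, r)) = row_mx 1%:M 0.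
  by rewrite adj_col_mx adjmx1 adjmx0.
have isoE : adjmx (col_mx 1%:M 0 : 'M[C]_(r + k, r)) *m col_mx 1%:M 0 = 1%:M.
  by rewrite adjE mul_row_col mulmx1 mul0mx addr0.
rewrite exists_colspan_eq_kerP sub_mulker_col_mxP // -projmx_fixP //.
rewrite ulsubmx_compression -adjE.
exact: projector_compression_eq1 (projmx_adj _) (projmx_idem rankX) isoE.
Qed.
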